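(* Let $h:\mathbb{R}\to\mathbb{R}$ be a smooth function with $h(T)=\pi/2$ for $T\le 0$, $0<h(T)<\pi/2$ for $0<T<1$, and $h(T)=0$ for $T\ge 1$, and for $0\le T<1$ let $B(T)=\exp\left(\int_0^T \cot\bigl(h(z)\bigr)\,dz\right)$. Let $A>1$ be a constant. (i) Let $f(y,z)$ be a complex-valued function that is bounded for $y\in[-A,1-A]$ and $z\in[0,1+A]$. Then $$\lim_{y+A\to 1_-}\frac{1}{B(y+A)}\int_0^{y+A} B(z)\,f(y,z)\,dz=0.$$ (ii) If in addition $\partial_y f(y,z)$ is bounded for $y\in[-A,1-A]$ and $z\in[0,1+A]$, then $$\lim_{y+A\to 1_-}\partial_y\left(\frac{1}{B(y+A)}\int_0^{y+A} B(z)\,f(y,z)\,dz\right)=0.$$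
   Context: The limit $y+A\to 1_-$ means $y\to(1-A)$ from below, with $y+A\in(0,1)$. *)

From Stdlib Require Import Reals.
From Coquelicot Require Import Coquelicot.
Open Scope R_scope.

Definition smooth (h : R -> R) : Prop :=
  forall (n : nat) (x : R), ex_derive_n h n x.

Definition cutoff (h : R -> R) : Prop :=
  smooth h /\
  (forall T, T <= 0 -> h T = PI / 2) /\
  (forall T, 0 < T < 1 -> 0 < h T < PI / 2) /\
  (forall T, 1 <= T -> h T = 0).

Definition B (h : R -> R) (T : R) : R :=
  exp (@RInt R_CompleteNormedModule (fun z => cos (h z) / sin (h z)) 0 T).

Definition in_rect (A y z : R) : Prop :=
  -A <= y <= 1 - A /\ 0 <= z <= 1 + A.

Definition bounded_on_rect (A : R) (g : R -> R -> C) : Prop :=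
  exists M : R, forall y z, in_rect A y z -> Cmod (g y z) <= M.

Definition continuous_on_rect (A : R) (g : R -> R -> C) : Prop :=
  forall y z, in_rect A y z ->
  forall eps : R, 0 < eps -> exists delta : R, 0 < delta /\
    forall y' z', in_rect A y' z' -> Rabs (y' - y) < delta -> Rabs (z' - z) < delta ->
      Cmod (g y' z' - g y z) < eps.

Definition G (h : R -> R) (A : R) (f : R -> R -> C) (y : R) : C :=
  scal (/ B h (y + A))
    (@RInt C_R_CompleteNormedModule (fun z => (scal (B h z) (f y z) : C)) 0 (y + A)).

(* Put k = cot h, so that B' = k B, and Psi = B tan h = B / k.  Then
   Psi' = B (1 + (tan h)'), and (tan h)' = h' / cos^2 h tends to h'(1) = 0 at T = 1:
   near 1, Psi is an antiderivative of B up to a factor 1 + o(1).  Moreover tan h (T) <= eps (1 - T)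
   and Psi (T) (1 - T) is nondecreasing, so 1/B(T) and 1/Psi(T) are O(1 - T).
   (i) Splitting the integral at a point s close to 1 gives
   |int_0^T B f| <= M s B(s) + 2 M Psi(T), and dividing by B(T) = Psi(T) / tan h(T)
   leaves O(1 - T).
   (ii) Differentiating under the integral sign, the derivative is
   -k(T) G + f(y, T) + G[d_y f] with T = y + A; the last term vanishes by (i), and
   -k(T) G + f(y, T) = (Psi(T) f(y, T) - int_0^T B f) / Psi(T), whose numerator is
   O(1) + o(Psi(T)) by continuity of f at (1 - A, 1), as in L'Hopital's rule. *)

From Stdlib Require Import Reals Lra Classical_Prop.
From Coquelicot Require Import Coquelicot.
Open Scope R_scope.

Local Notation RInt_C := (@RInt C_R_CompleteNormedModule).

Lemma scal_RtoC (r : R) (x : C) : scal r x = (RtoC r * x)%C.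
Proof.
  destruct x as [a b].
  apply injective_projections; simpl; unfold scal; simpl; unfold mult; simpl; ring.
Qed.

Lemma Cmod_scal (r : R) (x : C) : Cmod (scal r x) = Rabs r * Cmod x.
Proof. now rewrite scal_RtoC, Cmod_mult, Cmod_R. Qed.

Lemma Cmod_sub_triangle (a b c : C) : Cmod (a - b)%C <= Cmod (a - c)%C + Cmod (b - c)%C.
Proof.
  replace (a - b)%C with ((a - c) - (b - c))%C by ring.
  rewrite <- (Cmod_opp (b - c)). apply Cmod_triangle.
Qed.

Lemma Rabs_fst_sub_le (a b : C) : Rabs (fst a - fst b) <= Cmod (a - b)%C.
Proof. apply (re_le_Cmod (a - b)%C). Qed.

Lemma Rabs_snd_sub_le (a b : C) : Rabs (snd a - snd b) <= Cmod (a - b)%C.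
Proof. apply Rle_trans with (2 := Rmax_Cmod (a - b)%C), Rmax_r. Qed.

Lemma is_derive_fst_C (F : R -> C) x (l : C) :
  is_derive F x l -> is_derive (fun y => fst (F y)) x (fst l).
Proof.
  intros H. eapply filterdiff_ext_lin.
  - exact (filterdiff_comp _ fst _ fst H (filterdiff_linear _ is_linear_fst)).
  - reflexivity.
Qed.

Lemma is_derive_snd_C (F : R -> C) x (l : C) :
  is_derive F x l -> is_derive (fun y => snd (F y)) x (snd l).
Proof.
  intros H. eapply filterdiff_ext_lin.
  - exact (filterdiff_comp _ snd _ snd H (filterdiff_linear _ is_linear_snd)).
  - reflexivity.
Qed.

Lemma is_derive_C_pair (g1 g2 : R -> R) x d1 d2 :
  is_derive g1 x d1 -> is_derive g2 x d2 ->
  is_derive (fun y => (g1 y, g2 y) : C) x (d1, d2).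
Proof.
  intros H1 H2.
  replace (d1, d2) with (plus (scal d1 ((1, 0) : C)) (scal d2 ((0, 1) : C))).
  - apply (is_derive_ext (fun y => plus (scal (g1 y) ((1, 0) : C)) (scal (g2 y) ((0, 1) : C)))).
    + intros t. apply injective_projections; cbn; ring.
    + apply (@is_derive_plus _ C_R_NormedModule); apply (@is_derive_scal_l _ C_R_NormedModule); assumption.
  - apply injective_projections; cbn; ring.
Qed.

Lemma filterlim_at_left_C (g : R -> C) (a : R) :
  (forall eps, 0 < eps -> exists b, b < a /\ forall y, b <= y < a -> Cmod (g y) < eps) ->
  filterlim g (at_left a) (locally (RtoC 0)).
Proof.
  intros H. apply (filterlim_norm_zero (V := C_R_NormedModule)).
  apply (filterlim_ext (fun y => Cmod (g y))); [intros y; apply Cmod_norm|].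
  apply (filterlim_locally (F := at_left a)). intros eps.
  destruct (H eps (cond_pos eps)) as [b [Hba Hb]].
  assert (Hd : 0 < a - b) by lra.
  exists (mkposreal _ Hd). intros y Hy Hya.
  change (Rabs (y - a) < a - b) in Hy. apply Rabs_lt_between in Hy.
  change (Rabs (Cmod (g y) - 0) < eps).
  rewrite Rminus_0_r, Rabs_pos_eq by apply Cmod_ge_0.
  apply Hb. lra.
Qed.

Lemma Lub_Rbar_full (E : R -> Prop) : (forall x, E x) -> Lub_Rbar E = p_infty.
Proof.
  intros HE. apply is_lub_Rbar_unique. split.
  - intros x _. exact I.
  - intros [l| |] Hl; simpl; auto.
    + specialize (Hl (l + 1) (HE _)). simpl in Hl. lra.
    + exact (Hl 0 (HE 0)).
Qed.

(* [RInt] is [iota] of a filter that is trivial when there is no integral, and the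
   limit of the trivial filter on [C] computes to [0]. *)
Lemma RInt_C_not_ex (g : R -> C) a b : ~ ex_RInt g a b -> RInt_C g a b = RtoC 0.
Proof.
  intros Hg.
  unfold RInt, iota, lim. simpl. unfold C_complete_lim, R_complete_lim.
  rewrite !Lub_Rbar_full; [reflexivity| |]; intros x l Hl; exfalso; exact (Hg (ex_intro _ l Hl)).
Qed.

Lemma RInt_C_pair (g : R -> C) a b : ex_RInt g a b ->
  RInt_C g a b = (RInt (fun t => fst (g t)) a b, RInt (fun t => snd (g t)) a b).
Proof.
  intros [l Hl]. rewrite (@is_RInt_unique C_R_CompleteNormedModule _ _ _ _ Hl). symmetry.
  apply (RInt_fct_extend_pair _ _ (@is_RInt_unique _) (@is_RInt_unique _) g a b l Hl).
Qed.

Lemma is_RInt_scal_C (w : R -> R) a b Iw (c : C) :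
  is_RInt w a b Iw -> is_RInt (fun z => scal (w z) c) a b (scal Iw c).
Proof.
  intros Hw. apply (@is_RInt_fct_extend_pair R_NormedModule R_NormedModule);
    match goal with |- is_RInt _ _ _ (scal _ ?ci) =>
      apply (is_RInt_ext (fun t => scal ci (w t)));
      [ intros t _; change (ci * w t = w t * ci); ring
      | replace (scal Iw ci) with (scal ci Iw) by (change (ci * Iw = Iw * ci); ring);
        exact (is_RInt_scal w a b ci Iw Hw) ]
    end.
Qed.

Lemma Cmod_is_RInt_le (g : R -> C) (w : R -> R) a b (Ig : C) (Iw : R) : a <= b ->
  (forall x, a <= x <= b -> Cmod (g x) <= w x) -> is_RInt g a b Ig -> is_RInt w a b Iw ->
  Cmod Ig <= Iw.
Proof.
  intros Hab Hgw Hg Hw. rewrite Cmod_norm.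
  apply (norm_RInt_le g w a b Ig Iw Hab); [|exact Hg|exact Hw].
  intros x Hx. rewrite <- Cmod_norm. now apply Hgw.
Qed.

Lemma linear_lt_near_0 (K eta : R) : 0 <= K -> 0 < eta ->
  exists d, 0 < d /\ forall t, 0 <= t <= d -> K * t < eta.
Proof.
  intros HK He. assert (Hd : 0 < eta / (K + 1)) by (apply Rdiv_lt_0_compat; lra).
  exists (eta / (K + 1)). split; [exact Hd|]. intros t Ht.
  apply Rle_lt_trans with (K * (eta / (K + 1))); [apply Rmult_le_compat_l; lra|].
  replace (K * (eta / (K + 1))) with (eta - eta / (K + 1)) by (field; lra). lra.
Qed.

Lemma locally_2d_strip (y0 y1 c u v : R) : y0 < u < y1 -> v < c ->
  locally_2d (fun u' v' => y0 < u' < y1 /\ v' < c) u v.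
Proof.
  intros Hu Hv.
  assert (Hd : 0 < Rmin (Rmin (u - y0) (y1 - u)) (c - v))
    by (repeat apply Rmin_glb_lt; lra).
  exists (mkposreal _ Hd). simpl. intros u' v' Hu' Hv'.
  apply Rabs_lt_between in Hu'. apply Rabs_lt_between in Hv'.
  pose proof (Rmin_l (Rmin (u - y0) (y1 - u)) (c - v)).
  pose proof (Rmin_r (Rmin (u - y0) (y1 - u)) (c - v)).
  pose proof (Rmin_l (u - y0) (y1 - u)). pose proof (Rmin_r (u - y0) (y1 - u)).
  lra.
Qed.

Lemma continuity_2d_pt_continuous_snd (p : R -> R -> R) u v :
  continuity_2d_pt p u v -> continuous (p u) v.
Proof.
  intros Hp. apply (filterlim_locally (F := locally v)). intros eps.
  exact (locally_2d_1d_const_x _ u v (Hp eps)).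
Qed.

Lemma is_derive_RInt_param_shift (p dp : R -> R -> R) (y0 y1 c d x : R) :
  y0 < x < y1 -> 0 <= x + d < c ->
  (forall u v, y0 < u < y1 -> is_derive (fun u' => p u' v) u (dp u v)) ->
  (forall u v, y0 < u < y1 -> v < c -> continuity_2d_pt p u v) ->
  (forall u v, y0 < u < y1 -> v < c -> continuity_2d_pt dp u v) ->
  is_derive (fun y => RInt (p y) 0 (y + d)) x (RInt (dp x) 0 (x + d) + p x (x + d)).
Proof.
  intros Hx Hxd Hp' Hpc Hdpc.
  assert (Hint : forall y a b, y0 < y < y1 -> a < c -> b < c -> ex_RInt (p y) a b).
  { intros y a b Hy Ha Hb. apply (@ex_RInt_continuous R_CompleteNormedModule).
    intros t Ht. apply continuity_2d_pt_continuous_snd, Hpc; [exact Hy|].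
    apply Rle_lt_trans with (1 := proj2 Ht). now apply Rmax_lub_lt. }
  assert (HD : forall u v, y0 < u < y1 -> Derive (fun u' => p u' v) u = dp u v)
    by (intros; now apply is_derive_unique, Hp').
  assert (HDc : forall u v, y0 < u < y1 -> v < c ->
            continuity_2d_pt (fun u v => Derive (fun z => p z v) u) u v).
  { intros u v Hu Hv. apply continuity_2d_pt_ext_loc with (f := dp); [|now apply Hdpc].
    apply locally_2d_impl with (2 := locally_2d_strip y0 y1 c u v Hu Hv).
    apply locally_2d_forall. intros u' v' [Hu' _]. symmetry. now apply HD. }
  assert (Hloc : locally x (fun y => y0 < y < y1))
    by (apply locally_interval with (a := Finite y0) (b := Finite y1); simpl; tauto).
  assert (He : 0 < (c - (x + d)) / 2) by lra.
  set (e := mkposreal _ He).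
  replace (RInt (dp x) 0 (x + d)) with (RInt (fun t => Derive (fun u => p u t) x) 0 (x + d))
    by (apply RInt_ext; intros; now apply HD).
  rewrite <- (Rmult_1_r (p x (x + d))).
  apply (is_derive_RInt_param_bound_comp_aux3 p 0 (fun y => y + d) x 1).
  - apply filter_imp with (2 := Hloc). intros y Hy. apply Hint; lra.
  - exists e. apply filter_imp with (2 := Hloc). intros y Hy. apply Hint; simpl; lra.
  - auto_derive; [exact I | ring].
  - exists e. apply filter_imp with (2 := Hloc). intros y Hy t _. eexists. now apply Hp'.
  - intros t Ht. rewrite Rmin_left, Rmax_right in Ht by lra. apply HDc; lra.
  - apply locally_2d_impl with (2 := locally_2d_strip y0 y1 c x (x + d) Hx (proj2 Hxd)).
    apply locally_2d_forall. intros u v [Hu Hv]. now apply HDc.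
  - apply continuity_pt_filterlim, continuity_2d_pt_continuous_snd, Hpc; lra.
Qed.

(* Coquelicot's Leibniz rule asks for 2-d continuity on full neighbourhoods, also outside
   the rectangle; composing with clamps extends a function continuous on the rectangle
   to the whole plane without changing it on the rectangle. *)
Definition clamp (a b u : R) := Rmax a (Rmin u b).

Lemma clamp_in a b u : a <= b -> a <= clamp a b u <= b.
Proof.
  intros Hab. unfold clamp. split; [apply Rmax_l|].
  apply Rmax_lub; [exact Hab | apply Rmin_r].
Qed.

Lemma clamp_id a b u : a <= u <= b -> clamp a b u = u.
Proof. intros Hu. unfold clamp. rewrite Rmin_left, Rmax_right; lra. Qed.

Lemma clamp_sub_le a b u v : Rabs (clamp a b u - clamp a b v) <= Rabs (u - v).
Proof.
  unfold clamp, Rmax, Rmin. repeat destruct Rle_dec; unfold Rabs; repeat destruct Rcase_abs; lra.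
Qed.

Lemma continuity_2d_pt_clamp_rect (A : R) (g : R -> R -> C) (pr : C -> R) :
  -1 <= A -> (forall a b, Rabs (pr a - pr b) <= Cmod (a - b)%C) -> continuous_on_rect A g ->
  forall u v, continuity_2d_pt (fun u v => pr (g (clamp (-A) (1 - A) u) (clamp 0 (1 + A) v))) u v.
Proof.
  intros HA Hpr Hg u v eps.
  assert (Hr : in_rect A (clamp (-A) (1 - A) u) (clamp 0 (1 + A) v))
    by (split; apply clamp_in; lra).
  destruct (Hg _ _ Hr eps (cond_pos eps)) as [d [Hd Hgd]].
  exists (mkposreal d Hd). intros u' v' Hu' Hv'. simpl in Hu', Hv'.
  apply Rle_lt_trans with (1 := Hpr _ _), Hgd.
  - split; apply clamp_in; lra.
  - apply Rle_lt_trans with (1 := clamp_sub_le _ _ _ _), Hu'.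
  - apply Rle_lt_trans with (1 := clamp_sub_le _ _ _ _), Hv'.
Qed.

Lemma B_pos h T : 0 < B h T.
Proof. apply exp_pos. Qed.

Section Cutoff.

Variable h : R -> R.
Hypothesis h_smooth : smooth h.
Hypothesis h_left : forall T, T <= 0 -> h T = PI / 2.
Hypothesis h_mid : forall T, 0 < T < 1 -> 0 < h T < PI / 2.
Hypothesis h_right : forall T, 1 <= T -> h T = 0.

Lemma cutoff_ex_derive x : ex_derive h x.
Proof. exact (h_smooth 1%nat x). Qed.

Lemma cutoff_continuous x : continuous h x.
Proof. apply (@ex_derive_continuous R_AbsRing R_NormedModule), cutoff_ex_derive. Qed.

Lemma Derive_cutoff_continuous x : continuous (Derive h) x.
Proof. apply (@ex_derive_continuous R_AbsRing R_NormedModule). exact (h_smooth 2%nat x). Qed.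

Lemma Derive_cutoff_1 : Derive h 1 = 0.
Proof.
  destruct (Req_dec (Derive h 1) 0) as [E|E]; [exact E|exfalso].
  assert (Hd := proj1 (is_derive_Reals _ _ _) (Derive_correct h 1 (cutoff_ex_derive 1))).
  destruct (Hd (Rabs (Derive h 1)) (Rabs_pos_lt _ E)) as [d Hdd].
  pose proof (cond_pos d) as Hd0.
  specialize (Hdd (d / 2) ltac:(lra) ltac:(rewrite Rabs_pos_eq; lra)).
  rewrite !h_right in Hdd by lra.
  replace ((0 - 0) / (d / 2) - Derive h 1) with (- Derive h 1) in Hdd by (field; lra).
  rewrite Rabs_Ropp in Hdd. lra.
Qed.

Lemma cutoff_bounds_lt_1 z : z < 1 -> 0 < h z <= PI / 2.
Proof.
  intros Hz. pose proof PI_RGT_0. destruct (Rle_or_lt z 0).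
  - rewrite h_left by assumption. lra.
  - specialize (h_mid z). lra.
Qed.

Lemma cutoff_bounds_gt_0 z : 0 < z -> 0 <= h z < PI / 2.
Proof.
  intros Hz. pose proof PI_RGT_0. destruct (Rlt_or_le z 1).
  - specialize (h_mid z). lra.
  - rewrite h_right by assumption. lra.
Qed.

Lemma sin_cutoff_pos z : z < 1 -> 0 < sin (h z).
Proof.
  intros Hz. pose proof PI_RGT_0. pose proof (cutoff_bounds_lt_1 z Hz).
  apply sin_gt_0; lra.
Qed.

Lemma cos_cutoff_pos z : 0 < z -> 0 < cos (h z).
Proof.
  intros Hz. pose proof PI_RGT_0. pose proof (cutoff_bounds_gt_0 z Hz).
  apply cos_gt_0; lra.
Qed.

Lemma cos_cutoff_ge_0 z : z < 1 -> 0 <= cos (h z).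
Proof.
  intros Hz. pose proof PI_RGT_0. pose proof (cutoff_bounds_lt_1 z Hz).
  apply cos_ge_0; lra.
Qed.

Definition cot_h z := cos (h z) / sin (h z).
Definition tan_h z := sin (h z) / cos (h z).
Definition tan_h' z := Derive h z / cos (h z) ^ 2.

Lemma cot_h_ge_0 z : z < 1 -> 0 <= cot_h z.
Proof.
  intros Hz. apply Rdiv_le_0_compat.
  - now apply cos_cutoff_ge_0.
  - now apply sin_cutoff_pos.
Qed.

Lemma cot_h_continuous z : z < 1 -> continuous cot_h z.
Proof.
  intros Hz. apply (continuous_mult (fun z => cos (h z)) (fun z => / sin (h z))).
  - apply (continuous_comp h cos); [apply cutoff_continuous|].
    apply continuity_pt_filterlim, continuity_cos.
  - apply continuous_Rinv_comp; [|apply Rgt_not_eq, sin_cutoff_pos, Hz].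
    apply (continuous_comp h sin); [apply cutoff_continuous|].
    apply continuity_pt_filterlim, continuity_sin.
Qed.

Lemma ex_RInt_cot_h a b : a < 1 -> b < 1 -> ex_RInt cot_h a b.
Proof.
  intros Ha Hb. apply (@ex_RInt_continuous R_CompleteNormedModule).
  intros z Hz. apply cot_h_continuous.
  apply Rle_lt_trans with (1 := proj2 Hz). now apply Rmax_lub_lt.
Qed.

Lemma B_is_derive T : T < 1 -> is_derive (B h) T (cot_h T * B h T).
Proof.
  intros HT. apply (is_derive_comp exp (fun T => RInt cot_h 0 T)); [apply is_derive_exp|].
  apply is_derive_RInt with (a := 0); [|now apply cot_h_continuous].
  assert (Hd : 0 < 1 - T) by lra.
  exists (mkposreal _ Hd). intros b Hb.
  apply (@RInt_correct R_CompleteNormedModule), ex_RInt_cot_h; [lra|].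
  change (Rabs (b - T) < 1 - T) in Hb. apply Rabs_lt_between in Hb. lra.
Qed.

Lemma B_continuous T : T < 1 -> continuous (B h) T.
Proof.
  intros HT. apply (@ex_derive_continuous R_AbsRing R_NormedModule).
  eexists. now apply B_is_derive.
Qed.

Lemma continuity_2d_pt_B u v : v < 1 -> continuity_2d_pt (fun _ v => B h v) u v.
Proof.
  intros Hv eps. destruct (proj1 (filterlim_locally _ _) (B_continuous v Hv) eps) as [del Hdel].
  exists del. intros u' v' _ Hv'. exact (Hdel v' Hv').
Qed.

Lemma B_le z s : z <= s < 1 -> B h z <= B h s.
Proof.
  intros Hzs. unfold B. fold cot_h.
  assert (Hsplit : RInt cot_h 0 s = RInt cot_h 0 z + RInt cot_h z s).
  { symmetry. apply (RInt_Chasles cot_h); apply ex_RInt_cot_h; lra. }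
  assert (Hpos : 0 <= RInt cot_h z s).
  { apply RInt_ge_0; [lra | apply ex_RInt_cot_h; lra |].
    intros x Hx. apply cot_h_ge_0. lra. }
  rewrite Hsplit. destruct Hpos as [Hlt|Heq].
  - left. apply exp_increasing. lra.
  - rewrite <- Heq, Rplus_0_r. lra.
Qed.

Lemma cot_h_mul_tan_h z : 0 < z < 1 -> cot_h z * tan_h z = 1.
Proof.
  intros Hz. unfold cot_h, tan_h.
  pose proof (sin_cutoff_pos z (proj2 Hz)). pose proof (cos_cutoff_pos z (proj1 Hz)).
  field. lra.
Qed.

Lemma tan_h_pos z : 0 < z < 1 -> 0 < tan_h z.
Proof.
  intros Hz. apply Rdiv_lt_0_compat.
  - apply sin_cutoff_pos, Hz.
  - apply cos_cutoff_pos, Hz.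
Qed.

Lemma tan_h_1 : tan_h 1 = 0.
Proof. unfold tan_h. rewrite h_right, sin_0 by lra. unfold Rdiv. ring. Qed.

Lemma tan_h'_1 : tan_h' 1 = 0.
Proof. unfold tan_h'. rewrite Derive_cutoff_1. unfold Rdiv. ring. Qed.

Lemma tan_h_is_derive z : 0 < z -> is_derive tan_h z (tan_h' z).
Proof.
  intros Hz. pose proof (cos_cutoff_pos z Hz).
  pose proof (sin2_cos2 (h z)) as E. unfold Rsqr in E.
  unfold tan_h, tan_h'. auto_derive.
  - pose proof (cutoff_ex_derive z). repeat split; auto. lra.
  - change (Derive (fun x => h x) z) with (Derive h z).
    replace (Derive h z / cos (h z) ^ 2)
      with (Derive h z * (sin (h z) * sin (h z) + cos (h z) * cos (h z)) / cos (h z) ^ 2)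
      by (rewrite E; field; lra).
    field. lra.
Qed.

Lemma tan_h'_continuous z : 0 < z -> continuous tan_h' z.
Proof.
  intros Hz. apply (continuous_mult (Derive h) (fun z => / cos (h z) ^ 2));
    [apply Derive_cutoff_continuous|].
  apply continuous_Rinv_comp; [|apply pow_nonzero, Rgt_not_eq, cos_cutoff_pos, Hz].
  apply (continuous_comp (fun z => cos (h z)) (fun x => x ^ 2)).
  - apply (continuous_comp h cos); [apply cutoff_continuous|].
    apply continuity_pt_filterlim, continuity_cos.
  - apply continuity_pt_filterlim, derivable_continuous_pt, derivable_pt_pow.
Qed.

Definition Psi z := tan_h z * B h z.
Definition Psi' z := B h z * (1 + tan_h' z).

Lemma Psi_pos z : 0 < z < 1 -> 0 < Psi z.
Proof. intros Hz. apply Rmult_lt_0_compat; [now apply tan_h_pos | apply B_pos]. Qed.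

Lemma Psi_is_derive z : 0 < z < 1 -> is_derive Psi z (Psi' z).
Proof.
  intros Hz.
  assert (H := is_derive_mult tan_h (B h) z _ _ (tan_h_is_derive z (proj1 Hz))
                 (B_is_derive z (proj2 Hz)) Rmult_comm).
  unfold plus, mult in H; simpl in H.
  replace (Psi' z) with (tan_h' z * B h z + tan_h z * (cot_h z * B h z)); [exact H|].
  unfold Psi'. rewrite <- (cot_h_mul_tan_h z Hz). ring.
Qed.

Lemma Psi'_continuous z : 0 < z < 1 -> continuous Psi' z.
Proof.
  intros Hz. apply (continuous_mult (B h) (fun z => 1 + tan_h' z)).
  - apply B_continuous, Hz.
  - apply (continuous_plus (fun _ => 1) tan_h'); [apply continuous_const|].
    apply tan_h'_continuous, Hz.
Qed.

Lemma is_RInt_Psi' s T : 0 < s <= T -> T < 1 -> is_RInt Psi' s T (Psi T - Psi s).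
Proof.
  intros Hs HT. apply (@is_RInt_derive R_CompleteNormedModule); intros x Hx;
    rewrite Rmin_left, Rmax_right in Hx by lra.
  - apply Psi_is_derive. lra.
  - apply Psi'_continuous. lra.
Qed.

Lemma tan_h'_small_near_1 eps d : 0 < eps -> 0 < d ->
  exists s, 0 < s < 1 /\ 1 - d < s /\ forall z, s <= z <= 1 -> Rabs (tan_h' z) <= eps.
Proof.
  intros He Hd.
  destruct (proj1 (filterlim_locally _ _) (tan_h'_continuous 1 Rlt_0_1) (mkposreal eps He))
    as [del Hdel].
  pose proof (cond_pos del).
  set (m := Rmin (Rmin del d) 1).
  assert (0 < m) by (unfold m; repeat apply Rmin_glb_lt; lra).
  assert (m <= del /\ m <= d /\ m <= 1) as (? & ? & ?).
  { unfold m. pose proof (Rmin_l (Rmin del d) 1). pose proof (Rmin_r (Rmin del d) 1).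
    pose proof (Rmin_l del d). pose proof (Rmin_r del d). lra. }
  exists (1 - m / 2). split; [lra|]. split; [lra|].
  intros z Hz. left.
  assert (Hb : ball (tan_h' 1) eps (tan_h' z)).
  { apply Hdel. change (Rabs (z - 1) < del). rewrite Rabs_left1; lra. }
  change (Rabs (tan_h' z - tan_h' 1) < eps) in Hb.
  now rewrite tan_h'_1, Rminus_0_r in Hb.
Qed.

Section NearOne.

Variables s eps : R.
Hypothesis Hs : 0 < s < 1.
Hypothesis Heps : eps <= 1 / 2.
Hypothesis tan_h'_small : forall z, s <= z <= 1 -> Rabs (tan_h' z) <= eps.

Lemma tan_h_le z : s <= z <= 1 -> tan_h z <= eps * (1 - z).
Proof.
  intros Hz.
  assert (HI : is_RInt tan_h' z 1 (tan_h 1 - tan_h z)).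
  { apply (@is_RInt_derive R_CompleteNormedModule); intros x Hx;
      rewrite Rmin_left, Rmax_right in Hx by lra.
    - apply tan_h_is_derive. lra.
    - apply tan_h'_continuous. lra. }
  assert (Hb := abs_RInt_le_const tan_h' z 1 eps (proj2 Hz) (ex_intro _ _ HI)
                  (fun x Hx => tan_h'_small x ltac:(lra))).
  rewrite (is_RInt_unique _ _ _ _ HI), tan_h_1 in Hb.
  apply Rabs_le_between in Hb. lra.
Qed.

Lemma B_le_2_Psi' z : s <= z <= 1 -> B h z <= 2 * Psi' z.
Proof.
  intros Hz. unfold Psi'. pose proof (B_pos h z).
  pose proof (tan_h'_small z Hz) as Hd. apply Rabs_le_between in Hd.
  assert (B h z * (1 / 2) <= B h z * (1 + tan_h' z)) by (apply Rmult_le_compat_l; lra).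
  lra.
Qed.

(* (Psi (1 - z))' = B ((1 + tan_h') (1 - z) - tan_h) >= (1 - 2 eps) B (1 - z) >= 0. *)
Lemma Psi_mul_1_minus_le T : s <= T < 1 -> Psi s * (1 - s) <= Psi T * (1 - T).
Proof.
  intros HT.
  assert (HI : is_RInt (fun z => Psi' z * (1 - z) - Psi z) s T
                 (Psi T * (1 - T) - Psi s * (1 - s))).
  { apply (@is_RInt_derive R_CompleteNormedModule (fun z => Psi z * (1 - z)));
      intros x Hx; rewrite Rmin_left, Rmax_right in Hx by lra.
    - replace (Psi' x * (1 - x) - Psi x) with (Psi' x * (1 - x) + Psi x * (-1)) by ring.
      apply (is_derive_mult Psi (fun z => 1 - z)); [apply Psi_is_derive; lra| |apply Rmult_comm].
      auto_derive; [exact I | ring].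
    - apply (continuous_minus (fun z => Psi' z * (1 - z)) Psi).
      + apply (continuous_mult Psi' (fun z => 1 - z)); [apply Psi'_continuous; lra|].
        apply (continuous_minus (fun _ => 1) (fun z => z));
          [apply continuous_const | apply continuous_id].
      + apply (@ex_derive_continuous R_AbsRing R_NormedModule).
        eexists. apply Psi_is_derive. lra. }
  enough (0 <= RInt (fun z => Psi' z * (1 - z) - Psi z) s T)
    by (rewrite (is_RInt_unique _ _ _ _ HI) in *; lra).
  apply RInt_ge_0; [lra | exact (ex_intro _ _ HI) |].
  intros z Hz. unfold Psi', Psi. pose proof (B_pos h z).
  assert (Htan := tan_h_le z ltac:(lra)).
  pose proof (tan_h'_small z ltac:(lra)) as Hd. apply Rabs_le_between in Hd.
  assert (0 <= B h z * ((1 + tan_h' z) * (1 - z) - tan_h z)); [|nra].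
  apply Rmult_le_pos; nra.
Qed.

Lemma B_mul_1_minus_ge T : s <= T < 1 -> 2 * (Psi s * (1 - s)) <= B h T * (1 - T).
Proof.
  intros HT. pose proof (Psi_mul_1_minus_le T HT) as Hmono. pose proof (tan_h_le T ltac:(lra)).
  assert (Htan : 2 * tan_h T <= 1) by nra.
  assert (0 <= B h T * (1 - T)) by (pose proof (B_pos h T); nra).
  unfold Psi at 2 in Hmono. nra.
Qed.

Lemma Cmod_RInt_B_le (g : R -> C) M T : s <= T < 1 ->
  (forall z, 0 <= z <= T -> Cmod (g z) <= M) ->
  ex_RInt (fun z => scal (B h z) (g z)) 0 T ->
  Cmod (RInt_C (fun z => scal (B h z) (g z)) 0 T) <= M * s * B h s + 2 * M * Psi T.
Proof.
  intros HT Hg Hi.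
  set (F := fun z => scal (B h z) (g z) : C) in *.
  assert (HM : 0 <= M) by (apply Rle_trans with (2 := Hg 0 ltac:(lra)), Cmod_ge_0).
  assert (HF : forall z, 0 <= z <= T -> Cmod (F z) <= M * B h z).
  { intros z Hz. unfold F. rewrite Cmod_scal, Rabs_pos_eq by apply Rlt_le, B_pos.
    rewrite Rmult_comm. apply Rmult_le_compat_r; [apply Rlt_le, B_pos | now apply Hg]. }
  assert (Hi1 : ex_RInt F 0 s)
    by (apply (@ex_RInt_Chasles_1 C_R_CompleteNormedModule F 0 s T); [lra | exact Hi]).
  assert (Hi2 : ex_RInt F s T)
    by (apply (@ex_RInt_Chasles_2 C_R_CompleteNormedModule F 0 s T); [lra | exact Hi]).
  rewrite <- (@RInt_Chasles C_R_CompleteNormedModule F 0 s T Hi1 Hi2).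
  eapply Rle_trans; [apply Cmod_triangle | apply Rplus_le_compat].
  - apply (Cmod_is_RInt_le F (fun _ => M * B h s) 0 s); [lra | | |].
    + intros z Hz. apply Rle_trans with (1 := HF z ltac:(lra)).
      apply Rmult_le_compat_l; [lra | apply B_le; lra].
    + now apply (@RInt_correct C_R_CompleteNormedModule).
    + replace (M * s * B h s) with (scal (s - 0) (M * B h s))
        by (unfold scal; simpl; unfold mult; simpl; ring).
      apply (@is_RInt_const R_NormedModule).
  - apply Rle_trans with (2 * M * (Psi T - Psi s)).
    + apply (Cmod_is_RInt_le F (fun z => 2 * M * Psi' z) s T); [lra | | |].
      * intros z Hz. apply Rle_trans with (1 := HF z ltac:(lra)).
        pose proof (B_le_2_Psi' z ltac:(lra)). nra.
      * now apply (@RInt_correct C_R_CompleteNormedModule).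
      * apply (is_RInt_scal Psi'), is_RInt_Psi'; lra.
    + pose proof (Psi_pos s Hs). nra.
Qed.

Lemma Cmod_Psi'_scal_sub_B_scal_le z (c w : C) M : s <= z <= 1 ->
  Cmod c <= M -> Cmod (c - w) <= 2 * eps ->
  Cmod (scal (Psi' z) c - scal (B h z) w) <= 2 * eps * (M + 2) * Psi' z.
Proof.
  intros Hz Hc Hcw.
  replace (scal (Psi' z) c - scal (B h z) w)%C
    with (RtoC (B h z) * (RtoC (tan_h' z) * c + (c - w)))%C
    by (unfold Psi'; rewrite !scal_RtoC, RtoC_mult, RtoC_plus; ring).
  rewrite Cmod_mult, Cmod_R, Rabs_pos_eq by apply Rlt_le, B_pos.
  pose proof (B_le_2_Psi' z Hz). pose proof (B_pos h z).
  pose proof (tan_h'_small z Hz) as Htan.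
  assert (He : 0 <= eps) by (apply Rle_trans with (2 := Htan), Rabs_pos).
  assert (HM : 0 <= M) by (apply Rle_trans with (2 := Hc), Cmod_ge_0).
  assert (Cmod (RtoC (tan_h' z) * c + (c - w)) <= eps * (M + 2)).
  { eapply Rle_trans; [apply Cmod_triangle|]. rewrite Cmod_mult, Cmod_R.
    assert (Rabs (tan_h' z) * Cmod c <= eps * M)
      by (apply Rmult_le_compat; auto using Rabs_pos, Cmod_ge_0).
    lra. }
  apply Rle_trans with (B h z * (eps * (M + 2))); [apply Rmult_le_compat_l; lra|].
  replace (2 * eps * (M + 2) * Psi' z) with (2 * Psi' z * (eps * (M + 2))) by ring.
  apply Rmult_le_compat_r; [apply Rmult_le_pos|]; lra.
Qed.

Lemma Cmod_Psi_scal_sub_RInt_B_le (g : R -> C) (c : C) M T : s <= T < 1 ->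
  (forall z, 0 <= z <= T -> Cmod (g z) <= M) ->
  (forall z, s <= z <= T -> Cmod (c - g z) <= 2 * eps) ->
  Cmod c <= M ->
  ex_RInt (fun z => scal (B h z) (g z)) 0 T ->
  Cmod (scal (Psi T) c - RInt_C (fun z => scal (B h z) (g z)) 0 T)
    <= Psi s * M + (M * s * B h s + 2 * M * Psi s) + 2 * eps * (M + 2) * Psi T.
Proof.
  intros HT Hg Hgc Hc Hi.
  set (F := fun z => scal (B h z) (g z) : C) in *.
  assert (HM : 0 <= M) by (apply Rle_trans with (2 := Hc), Cmod_ge_0).
  assert (He : 0 <= eps) by (apply Rle_trans with (2 := tan_h'_small s ltac:(lra)), Rabs_pos).
  pose proof (Psi_pos s Hs) as HPs.
  assert (Hi1 : ex_RInt F 0 s)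
    by (apply (@ex_RInt_Chasles_1 C_R_CompleteNormedModule F 0 s T); [lra | exact Hi]).
  assert (Hi2 : ex_RInt F s T)
    by (apply (@ex_RInt_Chasles_2 C_R_CompleteNormedModule F 0 s T); [lra | exact Hi]).
  rewrite <- (@RInt_Chasles C_R_CompleteNormedModule F 0 s T Hi1 Hi2).
  set (I1 := RInt_C F 0 s). set (I2 := RInt_C F s T).
  replace (scal (Psi T) c - (plus I1 I2))%C
    with ((scal (Psi s) c - I1) + (scal (Psi T - Psi s)%R c - I2))%C
    by (change (plus I1 I2) with (I1 + I2)%C; rewrite !scal_RtoC, RtoC_minus; ring).
  eapply Rle_trans; [apply Cmod_triangle | apply Rplus_le_compat].
  - eapply Rle_trans; [apply Cmod_triangle | apply Rplus_le_compat].
    + rewrite Cmod_scal, Rabs_pos_eq by lra. now apply Rmult_le_compat_l; [lra|].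
    + rewrite Cmod_opp. apply Cmod_RInt_B_le; [lra | |exact Hi1].
      intros z Hz. apply Hg. lra.
  - apply Rle_trans with (2 * eps * (M + 2) * (Psi T - Psi s));
      [|rewrite Rmult_minus_distr_l;
        assert (0 <= 2 * eps * (M + 2) * Psi s) by (apply Rmult_le_pos; [apply Rmult_le_pos|]; lra);
        lra].
    apply (Cmod_is_RInt_le (fun z => scal (Psi' z) c - F z)%C
             (fun z => 2 * eps * (M + 2) * Psi' z) s T); [lra | | |].
    + intros z Hz. apply Cmod_Psi'_scal_sub_B_scal_le; [lra | exact Hc | apply Hgc; lra].
    + apply (@is_RInt_minus C_R_NormedModule).
      * apply is_RInt_scal_C, is_RInt_Psi'; lra.
      * now apply (@RInt_correct C_R_CompleteNormedModule).
    + apply (is_RInt_scal Psi'), is_RInt_Psi'; lra.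
Qed.

Lemma Cmod_B_average_le (g : R -> C) M T : s <= T < 1 ->
  (forall z, 0 <= z <= T -> Cmod (g z) <= M) ->
  Cmod (scal (/ B h T) (RInt_C (fun z => scal (B h z) (g z)) 0 T))
    <= (M * s * B h s / (2 * (Psi s * (1 - s))) + 2 * eps * M) * (1 - T).
Proof.
  intros HT Hg.
  assert (HM : 0 <= M) by (apply Rle_trans with (2 := Hg 0 ltac:(lra)), Cmod_ge_0).
  assert (He : 0 <= eps) by (apply Rle_trans with (2 := tan_h'_small s ltac:(lra)), Rabs_pos).
  assert (HR0 : 0 < Psi s * (1 - s)) by (apply Rmult_lt_0_compat; [apply Psi_pos|]; lra).
  assert (HK : 0 <= M * s * B h s) by (pose proof (B_pos h s); repeat apply Rmult_le_pos; lra).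
  pose proof (B_pos h T) as HBT.
  destruct (classic (ex_RInt (fun z => scal (B h z) (g z)) 0 T)) as [Hi|Hi].
  2: { rewrite RInt_C_not_ex, Cmod_scal, Cmod_0, Rmult_0_r by exact Hi.
       apply Rmult_le_pos; [apply Rplus_le_le_0_compat; [apply Rdiv_le_0_compat|]|]; nra. }
  rewrite Cmod_scal, Rabs_pos_eq by (apply Rlt_le, Rinv_0_lt_compat, HBT).
  apply Rle_trans with (/ B h T * (M * s * B h s + 2 * M * Psi T)).
  { apply Rmult_le_compat_l; [apply Rlt_le, Rinv_0_lt_compat, HBT|].
    apply Cmod_RInt_B_le; assumption. }
  assert (HinvB : / B h T <= (1 - T) / (2 * (Psi s * (1 - s)))).
  { replace (/ B h T) with ((1 - T) * / (B h T * (1 - T))) by (field; lra).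
    apply Rmult_le_compat_l; [lra|]. apply Rinv_le_contravar; [lra|].
    now apply B_mul_1_minus_ge. }
  pose proof (tan_h_le T ltac:(lra)) as Htan.
  replace (/ B h T * (M * s * B h s + 2 * M * Psi T))
    with (M * s * B h s * / B h T + 2 * M * tan_h T) by (unfold Psi; field; lra).
  apply Rle_trans with (M * s * B h s * ((1 - T) / (2 * (Psi s * (1 - s)))) + 2 * M * (eps * (1 - T))).
  - apply Rplus_le_compat; apply Rmult_le_compat_l; [exact HK | exact HinvB | lra | exact Htan].
  - pose proof (Psi_pos s Hs). right. field. repeat split; lra.
Qed.

Lemma Cmod_cot_h_average_add_le (g : R -> C) (c : C) M T : s <= T < 1 ->
  (forall z, 0 <= z <= T -> Cmod (g z) <= M) ->
  (forall z, s <= z <= T -> Cmod (c - g z) <= 2 * eps) ->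
  Cmod c <= M ->
  ex_RInt (fun z => scal (B h z) (g z)) 0 T ->
  Cmod (RtoC (- cot_h T) * scal (/ B h T) (RInt_C (fun z => scal (B h z) (g z)) 0 T) + c)
    <= (Psi s * M + (M * s * B h s + 2 * M * Psi s)) / (Psi s * (1 - s)) * (1 - T)
       + 2 * eps * (M + 2).
Proof.
  intros HT Hg Hgc Hc Hi.
  set (I := RInt_C (fun z => scal (B h z) (g z)) 0 T).
  set (Q := Psi s * M + (M * s * B h s + 2 * M * Psi s)).
  assert (HR0 : 0 < Psi s * (1 - s)) by (apply Rmult_lt_0_compat; [apply Psi_pos|]; lra).
  assert (HM : 0 <= M) by (apply Rle_trans with (2 := Hc), Cmod_ge_0).
  pose proof (Psi_pos s Hs) as HPs.
  assert (HQ : 0 <= Q).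
  { pose proof (B_pos h s).
    assert (0 <= M * s * B h s) by (apply Rmult_le_pos; [apply Rmult_le_pos|]; lra).
    unfold Q. nra. }
  pose proof (Psi_pos T ltac:(lra)) as HPT. pose proof (B_pos h T) as HBT.
  pose proof (tan_h_pos T ltac:(lra)) as HtT.
  assert (Hcot : cot_h T = / tan_h T).
  { pose proof (cot_h_mul_tan_h T ltac:(lra)). field_simplify_eq; lra. }
  replace (RtoC (- cot_h T) * scal (/ B h T)%R I + c)%C
    with (scal (/ Psi T)%R (scal (Psi T) c - I))%C.
  2: { rewrite !scal_RtoC, Hcot. unfold Psi.
       apply injective_projections; simpl; field; lra. }
  rewrite Cmod_scal, Rabs_pos_eq by (apply Rlt_le, Rinv_0_lt_compat, HPT).
  apply Rle_trans with (/ Psi T * (Q + 2 * eps * (M + 2) * Psi T)).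
  { apply Rmult_le_compat_l; [apply Rlt_le, Rinv_0_lt_compat, HPT|].
    now apply Cmod_Psi_scal_sub_RInt_B_le. }
  assert (HinvP : / Psi T <= (1 - T) / (Psi s * (1 - s))).
  { replace (/ Psi T) with ((1 - T) * / (Psi T * (1 - T))) by (field; lra).
    apply Rmult_le_compat_l; [lra|]. apply Rinv_le_contravar; [lra|].
    now apply Psi_mul_1_minus_le. }
  rewrite Rmult_plus_distr_l. apply Rplus_le_compat.
  - replace (Q / (Psi s * (1 - s)) * (1 - T)) with (Q * ((1 - T) / (Psi s * (1 - s))))
      by (field; lra).
    rewrite Rmult_comm. now apply Rmult_le_compat_l.
  - right. field. lra.
Qed.

End NearOne.

Section Rectangle.

Variable A : R.
Hypothesis HA : 1 < A.

Let clamped (q : R -> R -> R) u v := q (clamp (-A) (1 - A) u) (clamp 0 (1 + A) v).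

Lemma ex_RInt_B_mul (q : R -> R -> R) y a b :
  (forall u v, continuity_2d_pt (clamped q) u v) -> -A <= y <= 1 - A -> 0 <= a <= b -> b < 1 ->
  ex_RInt (fun z => B h z * q y z) a b.
Proof.
  intros Hq Hy Hab Hb.
  apply (@ex_RInt_ext R_NormedModule (fun z => B h z * clamped q y z)).
  { intros z Hz. rewrite Rmin_left, Rmax_right in Hz by lra.
    unfold clamped. now rewrite !clamp_id by lra. }
  apply (@ex_RInt_continuous R_CompleteNormedModule). intros z Hz.
  rewrite Rmin_left, Rmax_right in Hz by lra.
  apply (continuous_mult (B h) (clamped q y)).
  - apply B_continuous. lra.
  - apply continuity_2d_pt_continuous_snd, Hq.
Qed.

Lemma is_derive_RInt_B_mul (q dq : R -> R -> R) x : -A < x < 1 - A ->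
  (forall y z, -A < y < 1 - A -> 0 <= z <= 1 + A -> is_derive (fun y' => q y' z) y (dq y z)) ->
  (forall u v, continuity_2d_pt (clamped q) u v) ->
  (forall u v, continuity_2d_pt (clamped dq) u v) ->
  is_derive (fun y => RInt (fun z => B h z * q y z) 0 (y + A)) x
    (RInt (fun z => B h z * dq x z) 0 (x + A) + B h (x + A) * q x (x + A)).
Proof.
  intros Hx Hq' Hq Hdq.
  assert (Hloc : forall u, -A < u < 1 - A -> locally u (fun y => -A < y < 1 - A))
    by (intros u Hu; apply locally_interval with (a := Finite (-A)) (b := Finite (1 - A));
        simpl; tauto).
  apply is_derive_ext_loc with (fun y => RInt (fun z => B h z * clamped q y z) 0 (y + A)).
  { apply filter_imp with (2 := Hloc x Hx). intros y Hy. apply RInt_ext. intros z Hz.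
    rewrite Rmin_left, Rmax_right in Hz by lra. unfold clamped. now rewrite !clamp_id by lra. }
  replace (RInt (fun z => B h z * dq x z) 0 (x + A) + B h (x + A) * q x (x + A))
    with (RInt (fun z => B h z * clamped dq x z) 0 (x + A) + B h (x + A) * clamped q x (x + A)).
  2: { unfold clamped. rewrite (clamp_id (-A)), (clamp_id 0) by lra. f_equal.
       apply RInt_ext. intros z Hz. rewrite Rmin_left, Rmax_right in Hz by lra.
       now rewrite !clamp_id by lra. }
  apply (is_derive_RInt_param_shift (fun u v => B h v * clamped q u v)
           (fun u v => B h v * clamped dq u v) (-A) (1 - A) 1 A x Hx ltac:(lra)).
  - intros u v Hu. apply is_derive_scal.
    apply is_derive_ext_loc with (fun u' => q u' (clamp 0 (1 + A) v)).
    + apply filter_imp with (2 := Hloc u Hu). intros y Hy.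
      unfold clamped. now rewrite (clamp_id (-A)) by lra.
    + unfold clamped. rewrite (clamp_id (-A)) by lra. apply Hq'; [exact Hu | apply clamp_in; lra].
  - intros u v _ Hv. apply continuity_2d_pt_mult; [now apply continuity_2d_pt_B | apply Hq].
  - intros u v _ Hv. apply continuity_2d_pt_mult; [now apply continuity_2d_pt_B | apply Hdq].
Qed.

Lemma continuity_2d_pt_clamped_fst (g : R -> R -> C) : continuous_on_rect A g ->
  forall u v, continuity_2d_pt (clamped (fun y z => fst (g y z))) u v.
Proof. apply continuity_2d_pt_clamp_rect; [lra | apply Rabs_fst_sub_le]. Qed.

Lemma continuity_2d_pt_clamped_snd (g : R -> R -> C) : continuous_on_rect A g ->
  forall u v, continuity_2d_pt (clamped (fun y z => snd (g y z))) u v.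
Proof. apply continuity_2d_pt_clamp_rect; [lra | apply Rabs_snd_sub_le]. Qed.

Lemma ex_RInt_B_scal (g : R -> R -> C) y a b : continuous_on_rect A g ->
  -A <= y <= 1 - A -> 0 <= a <= b -> b < 1 -> ex_RInt (fun z => scal (B h z) (g y z)) a b.
Proof.
  intros Hg Hy Hab Hb. apply (@ex_RInt_fct_extend_pair R_NormedModule R_NormedModule).
  - change (ex_RInt (fun z => B h z * fst (g y z)) a b).
    apply (ex_RInt_B_mul (fun y z => fst (g y z)) y a b); auto.
    now apply continuity_2d_pt_clamped_fst.
  - change (ex_RInt (fun z => B h z * snd (g y z)) a b).
    apply (ex_RInt_B_mul (fun y z => snd (g y z)) y a b); auto.
    now apply continuity_2d_pt_clamped_snd.
Qed.

(* Coquelicot differentiates parametric integrals of real functions only, so [G] is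
   differentiated componentwise. *)
Lemma G_eq_pair (g : R -> R -> C) y : continuous_on_rect A g -> -A <= y < 1 - A ->
  G h A g y = (/ B h (y + A) * RInt (fun z => B h z * fst (g y z)) 0 (y + A),
               / B h (y + A) * RInt (fun z => B h z * snd (g y z)) 0 (y + A)).
Proof.
  intros Hg Hy. unfold G.
  rewrite RInt_C_pair; [apply injective_projections; cbn -[B RInt]; f_equal|].
  apply ex_RInt_B_scal; (assumption || lra).
Qed.

Definition G_derivative (f df : R -> R -> C) y : C :=
  (RtoC (- cot_h (y + A)) * G h A f y + f y (y + A)%R + G h A df y)%C.

Lemma G_is_derive (f df : R -> R -> C) x :
  continuous_on_rect A f -> continuous_on_rect A df ->
  (forall y z, -A < y < 1 - A -> 0 <= z <= 1 + A -> is_derive (fun y' => f y' z) y (df y z)) ->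
  -A < x < 1 - A ->
  is_derive (G h A f) x (G_derivative f df x).
Proof.
  intros Hf Hdf Hf' Hx. set (T := x + A).
  assert (HB : is_derive (fun y => / B h (y + A)) x (- (cot_h T * B h T) / B h T ^ 2)).
  { apply (is_derive_inv (fun y => B h (y + A))); [|apply Rgt_not_eq, B_pos].
    rewrite <- (Rmult_1_l (cot_h T * B h T)).
    apply (is_derive_comp (B h) (fun y => y + A) x (cot_h T * B h T) 1).
    - apply B_is_derive. unfold T. lra.
    - auto_derive; [exact I | ring]. }
  assert (HJ1 := is_derive_RInt_B_mul (fun y z => fst (f y z)) (fun y z => fst (df y z)) x Hx
    (fun y z Hy Hz => is_derive_fst_C _ _ _ (Hf' y z Hy Hz))
    (continuity_2d_pt_clamped_fst f Hf) (continuity_2d_pt_clamped_fst df Hdf)).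
  assert (HJ2 := is_derive_RInt_B_mul (fun y z => snd (f y z)) (fun y z => snd (df y z)) x Hx
    (fun y z Hy Hz => is_derive_snd_C _ _ _ (Hf' y z Hy Hz))
    (continuity_2d_pt_clamped_snd f Hf) (continuity_2d_pt_clamped_snd df Hdf)).
  assert (HP := is_derive_C_pair _ _ x _ _ (is_derive_mult _ _ x _ _ HB HJ1 Rmult_comm)
                                           (is_derive_mult _ _ x _ _ HB HJ2 Rmult_comm)).
  assert (Hloc : locally x (fun y => -A < y < 1 - A))
    by (apply locally_interval with (a := Finite (-A)) (b := Finite (1 - A)); simpl; tauto).
  eapply is_derive_ext_loc.
  { apply filter_imp with (2 := Hloc). intros y Hy. symmetry. apply G_eq_pair; [exact Hf | lra]. }
  match type of HP with is_derive _ _ ?l => replace (G_derivative f df x) with l; [exact HP|] end.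
  unfold G_derivative. rewrite (G_eq_pair f x), (G_eq_pair df x) by (assumption || lra).
  pose proof (B_pos h T). fold T.
  apply injective_projections; simpl; unfold plus, mult; simpl; field; lra.
Qed.

Lemma G_small_at_left (g : R -> R -> C) : bounded_on_rect A g ->
  forall eta, 0 < eta -> exists b, b < 1 - A /\ forall y, b <= y < 1 - A -> Cmod (G h A g y) < eta.
Proof.
  intros [M HM] eta Heta.
  assert (HM0 : 0 <= M) by (apply Rle_trans with (2 := HM (-A) 0 ltac:(split; lra)), Cmod_ge_0).
  destruct (tan_h'_small_near_1 (1 / 2) 1 ltac:(lra) ltac:(lra)) as (s & Hs & _ & Hsmall).
  set (K := M * s * B h s / (2 * (Psi s * (1 - s))) + 2 * (1 / 2) * M).
  assert (HK : 0 <= K).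
  { pose proof (Psi_pos s Hs). pose proof (B_pos h s).
    assert (0 <= M * s * B h s) by (apply Rmult_le_pos; [apply Rmult_le_pos|]; lra).
    assert (0 < 2 * (Psi s * (1 - s))) by (apply Rmult_lt_0_compat; [|apply Rmult_lt_0_compat]; lra).
    unfold K. apply Rplus_le_le_0_compat; [apply Rdiv_le_0_compat|]; lra. }
  destruct (linear_lt_near_0 K eta HK Heta) as (d & Hd & Hlin).
  exists (Rmax s (1 - d) - A). split; [enough (Rmax s (1 - d) < 1) by lra; apply Rmax_lub_lt; lra|].
  intros y Hy. pose proof (Rmax_l s (1 - d)). pose proof (Rmax_r s (1 - d)).
  apply Rle_lt_trans with (K * (1 - (y + A))); [|apply Hlin; lra].
  apply (Cmod_B_average_le s (1 / 2) Hs ltac:(lra) Hsmall (g y) M (y + A)); [lra|].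
  intros z Hz. apply HM. split; lra.
Qed.

Lemma neg_cot_h_G_add_f_small_at_left (f : R -> R -> C) :
  bounded_on_rect A f -> continuous_on_rect A f ->
  forall eta, 0 < eta -> exists b, b < 1 - A /\ forall y, b <= y < 1 - A ->
    Cmod (RtoC (- cot_h (y + A)) * G h A f y + f y (y + A)%R)%C < eta.
Proof.
  intros [M HM] Hf eta Heta.
  assert (HM0 : 0 <= M) by (apply Rle_trans with (2 := HM (-A) 0 ltac:(split; lra)), Cmod_ge_0).
  set (eps := Rmin (1 / 2) (eta / (4 * (M + 2)))).
  assert (He0 : 0 < eps) by (apply Rmin_glb_lt; [lra | apply Rdiv_lt_0_compat; lra]).
  assert (He1 : eps <= 1 / 2) by apply Rmin_l.
  assert (He2 : 2 * eps * (M + 2) <= eta / 2).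
  { assert (eps <= eta / (4 * (M + 2))) by apply Rmin_r.
    replace (eta / 2) with (2 * (eta / (4 * (M + 2))) * (M + 2)) by (field; lra).
    apply Rmult_le_compat_r; lra. }
  destruct (Hf (1 - A) 1 ltac:(split; lra) eps He0) as (d & Hd & Hfd).
  destruct (tan_h'_small_near_1 eps d He0 Hd) as (s & Hs & Hsd & Hsmall).
  set (K := (Psi s * M + (M * s * B h s + 2 * M * Psi s)) / (Psi s * (1 - s))).
  assert (HK : 0 <= K).
  { pose proof (Psi_pos s Hs). pose proof (B_pos h s).
    assert (0 <= M * s * B h s) by (apply Rmult_le_pos; [apply Rmult_le_pos|]; lra).
    assert (0 < Psi s * (1 - s)) by (apply Rmult_lt_0_compat; lra).
    unfold K. apply Rdiv_le_0_compat; [nra | lra]. }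
  destruct (linear_lt_near_0 K (eta / 2) HK ltac:(lra)) as (d' & Hd' & Hlin).
  exists (Rmax s (1 - d') - A). split; [enough (Rmax s (1 - d') < 1) by lra; apply Rmax_lub_lt; lra|].
  intros y Hy. pose proof (Rmax_l s (1 - d')). pose proof (Rmax_r s (1 - d')).
  assert (Hnear : forall z, s <= z <= y + A -> Cmod (f y z - f (1 - A)%R 1)%C < eps).
  { intros z Hz. apply Hfd; [split | |]; try lra; rewrite Rabs_left1; lra. }
  eapply Rle_lt_trans.
  { apply (Cmod_cot_h_average_add_le s eps Hs He1 Hsmall (f y) (f y (y + A)) M (y + A)).
    - lra.
    - intros z Hz. apply HM. split; lra.
    - intros z Hz. apply Rle_trans with (1 := Cmod_sub_triangle _ _ (f (1 - A)%R 1)).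
      pose proof (Hnear z Hz). pose proof (Hnear (y + A) ltac:(lra)). lra.
    - apply HM. split; lra.
    - apply ex_RInt_B_scal; (assumption || lra). }
  pose proof (Hlin (1 - (y + A)) ltac:(lra)). fold K. lra.
Qed.

End Rectangle.

End Cutoff.

Theorem mainTheorem2 (h : R -> R) (A : R) (Hh : cutoff h) (HA : 1 < A) :
  (* (i) *)
  (forall f : R -> R -> C,
     bounded_on_rect A f ->
     (forall y T, -A <= y <= 1 - A -> 0 <= T <= 1 + A -> ex_RInt (f y) 0 T) ->
     filterlim (G h A f) (at_left (1 - A)) (locally (0 : C))) /\
  (* (ii) *)
  (forall f df : R -> R -> C,
     bounded_on_rect A f ->
     continuous_on_rect A f ->
     (forall y z, -A < y < 1 - A -> 0 <= z <= 1 + A ->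
        is_derive (fun y' => f y' z) y (df y z)) ->
     continuous_on_rect A df ->
     bounded_on_rect A df ->
     exists G' : R -> C,
       (forall y, -A < y < 1 - A -> is_derive (G h A f) y (G' y)) /\
       filterlim G' (at_left (1 - A)) (locally (0 : C))).
Proof.
  destruct Hh as (Hsmooth & Hleft & Hmid & Hright).
  split.
  -
    intros f Hf _. apply filterlim_at_left_C.
    exact (G_small_at_left h Hsmooth Hleft Hmid Hright A HA f Hf).
  - intros f df Hf Hfc Hf' Hdfc Hdf. exists (G_derivative h A f df). split.
    + intros y Hy. now apply G_is_derive.
    + apply filterlim_at_left_C. intros eta Heta.
      destruct (neg_cot_h_G_add_f_small_at_left h Hsmooth Hleft Hmid Hright A HA f Hf Hfc (eta / 2))
        as (b1 & Hb1 & H1); [lra|].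
      destruct (G_small_at_left h Hsmooth Hleft Hmid Hright A HA df Hdf (eta / 2))
        as (b2 & Hb2 & H2); [lra|].
      exists (Rmax b1 b2). split; [now apply Rmax_lub_lt|].
      intros y Hy. pose proof (Rmax_l b1 b2). pose proof (Rmax_r b1 b2).
      eapply Rle_lt_trans; [apply Cmod_triangle|].
      pose proof (H1 y ltac:(lra)). pose proof (H2 y ltac:(lra)). lra.
Qed.
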